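(* Let $G$ be an abelian group and $X$ a finitely supported $G$-valued random variable. Let $S\subset G$ be a set with $\mathbb{P}(X\in S)\ge\frac12$. Then for any other finitely supported $G$-valued random variable $Y$, \[\log|S|\ge \mathbb{H}(Y)-4\,\mathrm{d}[X;Y]-2\log 2.\]
   Context: $\log$ is natural. $\mathbb{H}(X)=\sum_x p_X(x)\log(1/p_X(x))$ with $p_X(x)=\mathbb{P}(X=x)$. The entropic Ruzsa distance is $\mathrm{d}[X;Y]=\mathbb{H}(X'-Y')-\tfrac12\mathbb{H}(X)-\tfrac12\mathbb{H}(Y)$, where $X',Y'$ are independent with the same distributions as $X,Y$. *)

From mathcomp Require Import all_boot all_order all_algebra.
From mathcomp Require Import reals exp.
Set Implicit Arguments. Unset Strict Implicit. Unset Printing Implicit Defensive.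
Import Order.TTheory GRing.Theory Num.Theory.
Local Open Scope ring_scope.

Section FinSuppDist.
Variables (R : realType) (G : zmodType).

(* [p] is the probability mass function of a finitely supported G-valued
   random variable, whose support is contained in the duplicate-free list [s]. *)
Definition fsdist (p : G -> R) (s : seq G) : Prop :=
  [/\ uniq s, (forall x, 0 <= p x), (forall x, x \notin s -> p x = 0)
    & \sum_(x <- s) p x = 1].

(* Shannon entropy (natural log): H = sum_x p(x) log (1/p(x)), convention 0 log(1/0) = 0
   (automatic since the term is multiplied by p x = 0). *)
Definition entropy (p : G -> R) (s : seq G) : R :=
  \sum_(x <- s) p x * ln (p x)^-1.

Definition prob_in (p : G -> R) (s : seq G) (S : seq G) : R :=
  \sum_(x <- s | x \in S) p x.

(* Law of X' - Y' for independent X' ~ pX, Y' ~ pY. *)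
Definition diff_pmf (pX : G -> R) (sX : seq G) (pY : G -> R) (sY : seq G)
  (z : G) : R :=
  \sum_(x <- sX) \sum_(y <- sY) (if x - y == z then pX x * pY y else 0).

Definition diff_supp (sX sY : seq G) : seq G :=
  undup [seq x - y | x <- sX, y <- sY].

Definition ruzsa_dist (pX : G -> R) (sX : seq G) (pY : G -> R) (sY : seq G) : R :=
  entropy (diff_pmf pX sX pY sY) (diff_supp sX sY)
  - entropy pX sX / 2 - entropy pY sY / 2.

End FinSuppDist.

From mathcomp Require Import all_boot all_order all_algebra.
From mathcomp Require Import reals exp.
From mathcomp Require Import ring lra.
Set Implicit Arguments. Unset Strict Implicit. Unset Printing Implicit Defensive.
Import Order.TTheory GRing.Theory Num.Theory.
Local Open Scope ring_scope.

(* Let p = P(X \in S) and Z = X - Y.  Since Z is a difference with an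
   independent summand, H(Z | A) >= H(X | A) and H(Z | A) >= H(Y) for any event
   A on X alone; with A = [X \in S], where X takes at most |S| values,
   H(Z | A) >= H(Y) >= H(X | A) + H(Y) - log |S|.  Conditioning on [X \in S]
   does not increase entropy, and H(X) exceeds the conditional entropy
   p H(X | X \in S) + (1 - p) H(X | X \notin S) by at most log 2, so
   H(Z) >= H(X) + p (H(Y) - log |S|) - log 2.  Adding H(Z) >= H(Y) gives
   2 d[X;Y] >= p (H(Y) - log |S|) - log 2, and p >= 1/2 together with
   d[X;Y] >= 0 yields the claim.  Each entropy inequality is an instance of
   Gibbs' inequality for the sub-probability weights P(X = x, Y = y, X \in T). *)

Section RealFacts.
Variable R : realType.

Lemma subr_le_mul_lnB (a b : R) : 0 <= a -> 0 <= b -> (0 < a -> 0 < b) ->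
  a - b <= a * (ln a - ln b).
Proof.
move=> a_ge0 b_ge0 ab_pos; have [->|a_neq0] := eqVneq a 0; first by lra.
have a_gt0 : 0 < a by rewrite lt0r a_neq0.
have b_gt0 := ab_pos a_gt0.
have ba_gt0 : 0 < b / a by rewrite divr_gt0.
have := @le_ln1Dx R (b / a - 1) ltac:(lra).
rewrite addrC subrK ln_div ?posrE // => ln_le.
have a_ba : a * (b / a) = b by rewrite mulrC divfK ?gt_eqF.
nra.
Qed.

Lemma gibbs_ineq (I : Type) (r : seq I) (a b : I -> R) :
  (forall i, 0 <= a i) -> (forall i, 0 <= b i) -> (forall i, 0 < a i -> 0 < b i) ->
  \sum_(i <- r) a i - \sum_(i <- r) b i <= \sum_(i <- r) a i * (ln (a i) - ln (b i)).
Proof.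
move=> a_ge0 b_ge0 ab_pos; rewrite -sumrB.
apply: ler_sum => i _.
by apply: subr_le_mul_lnB; [apply: a_ge0 | apply: b_ge0 | apply: ab_pos].
Qed.

Lemma mul_lnV (p : R) : 0 <= p -> p * ln p^-1 = - (p * ln p).
Proof.
move=> p_ge0; have [->|p_neq0] := eqVneq p 0; first by rewrite !mul0r oppr0.
by rewrite lnV ?posrE ?lt0r ?p_neq0 // mulrN.
Qed.

Lemma binary_entropy_le_ln2 (p q : R) : 0 <= p -> 0 <= q -> p + q = 1 ->
  - ln 2 <= p * ln p + q * ln q.
Proof.
move=> p_ge0 q_ge0 pq1.
have half_gt0 : 0 < (2 : R)^-1 by rewrite invr_gt0.
have := @subr_le_mul_lnB p 2^-1 p_ge0 (ltW half_gt0) (fun _ => half_gt0).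
have := @subr_le_mul_lnB q 2^-1 q_ge0 (ltW half_gt0) (fun _ => half_gt0).
rewrite lnV ?posrE //; nra.
Qed.

Lemma sum_if_eq_inj_le (I T : eqType) (r : seq I) (Q : pred I) (f : I -> T)
    (a : T) (c : R) :
  injective f -> uniq r -> 0 <= c ->
  \sum_(i <- r | Q i) (if a == f i then c else 0) <= c.
Proof.
move=> f_inj r_uniq c_ge0; rewrite big_mkcond /=.
have [/hasP [j jr /andP [Qj /eqP ->]] | no_hit] :=
  boolP (has (fun i => Q i && (a == f i)) r).
  rewrite (bigD1_seq j) //= Qj eqxx big1 ?addr0 // => i ij.
  by rewrite (inj_eq f_inj) eq_sym (negbTE ij); case: (Q i).
rewrite big1_seq // => i /andP [_ ir]; case: ifP => // Qi; case: eqP => // afi.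
by case/negP: no_hit; apply/hasP; exists i; rewrite // Qi afi eqxx.
Qed.

Lemma ler_sum_seq_term (I : eqType) (r : seq I) (P : pred I) (F : I -> R) (j : I) :
  uniq r -> j \in r -> P j -> (forall i, P i -> 0 <= F i) ->
  F j <= \sum_(i <- r | P i) F i.
Proof.
move=> r_uniq jr Pj F_ge0; rewrite big_mkcond (bigD1_seq j) //= Pj lerDl.
by apply: sumr_ge0 => i _; case: ifP => // /F_ge0.
Qed.

End RealFacts.

Section DifferenceLaw.
Variables (R : realType) (G : zmodType) (pX pY : G -> R) (sX sY : seq G).
Hypotheses (hX : fsdist pX sX) (hY : fsdist pY sY).
Implicit Types (T : pred G) (x y z : G).

Let pX_ge0 x : 0 <= pX x. Proof. by case: hX. Qed.
Let pY_ge0 y : 0 <= pY y. Proof. by case: hY. Qed.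
Let sX_uniq : uniq sX. Proof. by case: hX. Qed.
Let sY_uniq : uniq sY. Proof. by case: hY. Qed.
Let sum_pX : \sum_(x <- sX) pX x = 1. Proof. by case: hX. Qed.
Let sum_pY : \sum_(y <- sY) pY y = 1. Proof. by case: hY. Qed.
Let mul_pmf_ge0 x y : 0 <= pX x * pY y. Proof. exact: mulr_ge0. Qed.

Definition mass_on (T : pred G) : R := \sum_(x <- sX | T x) pX x.

Let mass_onT : mass_on xpredT = 1. Proof. exact: sum_pX. Qed.

(* The sub-probability law of [X - Y] on the event [X \in T]. *)
Definition diff_pmf_on (T : pred G) (z : G) : R :=
  \sum_(x <- sX | T x) \sum_(y <- sY) (if x - y == z then pX x * pY y else 0).

Definition expect_on (T : pred G) (F : G -> G -> R) : R :=
  \sum_(x <- sX | T x) \sum_(y <- sY) pX x * pY y * F x y.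

Lemma supp_of_mul_pmf_gt0 x y : 0 < pX x * pY y ->
  [/\ 0 < pX x, 0 < pY y, x \in sX & y \in sY].
Proof.
move=> w_gt0.
have pX_gt0 : 0 < pX x.
  by rewrite lt0r pX_ge0 andbT; apply: contraTneq w_gt0 => ->; rewrite mul0r ltxx.
have pY_gt0 : 0 < pY y.
  by rewrite lt0r pY_ge0 andbT; apply: contraTneq w_gt0 => ->; rewrite mulr0 ltxx.
split=> //.
  by apply: contraTT pX_gt0; case: hX => _ _ pX0 _ /pX0 ->; rewrite ltxx.
by apply: contraTT pY_gt0; case: hY => _ _ pY0 _ /pY0 ->; rewrite ltxx.
Qed.

Lemma mass_on_ge0 T : 0 <= mass_on T.
Proof. exact: sumr_ge0. Qed.

Lemma mass_on_split T : mass_on T + mass_on (predC T) = 1.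
Proof. by rewrite -sum_pX /mass_on [RHS](bigID T). Qed.

Lemma diff_pmf_on_ge0 T z : 0 <= diff_pmf_on T z.
Proof. by do 2![apply: sumr_ge0 => ? _]; case: ifP. Qed.

Lemma mul_pmf_le_diff_pmf_on T x y : T x -> x \in sX -> y \in sY ->
  pX x * pY y <= diff_pmf_on T (x - y).
Proof.
move=> Tx xs ys.
pose F x' y' := if x' - y' == x - y then pX x' * pY y' else 0.
have F_ge0 x' y' : 0 <= F x' y' by rewrite /F; case: ifP.
have Fxy : F x y = pX x * pY y by rewrite /F eqxx.
have inner : F x y <= \sum_(y' <- sY) F x y'.
  by apply: (ler_sum_seq_term (P := xpredT)) => // *.
rewrite -Fxy; apply: (le_trans inner); rewrite /diff_pmf_on.
by apply: (ler_sum_seq_term (F := fun x' => \sum_(y' <- sY) F x' y')) => // *;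
  apply: sumr_ge0.
Qed.

Lemma diff_pmf_on_le_diff_pmf T z : diff_pmf_on T z <= diff_pmf pX sX pY sY z.
Proof.
rewrite /diff_pmf [X in _ <= X](bigID T) lerDl.
by do 2![apply: sumr_ge0 => ? _]; case: ifP.
Qed.

Lemma sum_mul_pmf_on T :
  \sum_(x <- sX | T x) \sum_(y <- sY) pX x * pY y = mass_on T.
Proof. by apply: eq_bigr => x _; rewrite -big_distrr /= sum_pY mulr1. Qed.

Lemma diff_pmf_on_le_mass_on T z : diff_pmf_on T z <= mass_on T.
Proof.
rewrite -sum_mul_pmf_on; do 2![apply: ler_sum => ? _].
by case: ifP.
Qed.

Lemma sum_diff_pmf_on_subl T x0 :
  \sum_(y <- sY) diff_pmf_on T (x0 - y) <= mass_on T.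
Proof.
rewrite -sum_mul_pmf_on /diff_pmf_on exchange_big /=; apply: ler_sum => x _.
rewrite exchange_big /=; apply: ler_sum => y _.
exact: (sum_if_eq_inj_le _ _ (subrI x0)).
Qed.

Lemma sum_diff_pmf_on_subr T (T' : pred G) y0 :
  \sum_(x <- sX | T' x) diff_pmf_on T (x - y0) <= mass_on T.
Proof.
rewrite -sum_mul_pmf_on /diff_pmf_on exchange_big /=; apply: ler_sum => x _.
rewrite exchange_big /=; apply: ler_sum => y _.
exact: (sum_if_eq_inj_le _ _ (addIr (- y0))).
Qed.

Lemma sum_diff_supp_diff_pmf_on T (f : G -> R) :
  \sum_(z <- diff_supp sX sY) diff_pmf_on T z * f z =
  expect_on T (fun x y => f (x - y)).
Proof.
rewrite /diff_pmf_on /expect_on.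
under eq_bigr do rewrite big_distrl /=.
under eq_bigr do under eq_bigr do rewrite big_distrl /=.
rewrite exchange_big big_seq_cond [RHS]big_seq_cond /=.
apply: eq_bigr => x /andP [xs _]; rewrite exchange_big big_seq [RHS]big_seq /=.
apply: eq_bigr => y ys.
have xy_supp : x - y \in diff_supp sX sY.
  by rewrite mem_undup; apply: (allpairs_f (fun a b => a - b)).
rewrite (bigD1_seq (x - y)) ?undup_uniq //= eqxx big1 ?addr0 // => z zxy.
by rewrite eq_sym (negbTE zxy) mul0r.
Qed.

Lemma eq_expect_on T F F' :
  (forall x y, T x -> 0 < pX x * pY y -> F x y = F' x y) ->
  expect_on T F = expect_on T F'.
Proof.
move=> eqF; apply: eq_bigr => x Tx; apply: eq_bigr => y _.
have [w_eq0|w_gt0] := eqVneq (pX x * pY y) 0; first by rewrite w_eq0 !mul0r.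
by rewrite eqF // lt0r w_gt0 mul_pmf_ge0.
Qed.

Lemma expect_onD T F F' :
  expect_on T (fun x y => F x y + F' x y) = expect_on T F + expect_on T F'.
Proof.
rewrite -big_split; apply: eq_bigr => x _; rewrite -big_split.
by apply: eq_bigr => y _; rewrite mulrDr.
Qed.

Lemma expect_onB T F F' :
  expect_on T (fun x y => F x y - F' x y) = expect_on T F - expect_on T F'.
Proof.
rewrite -sumrB; apply: eq_bigr => x _; rewrite -sumrB.
by apply: eq_bigr => y _; rewrite mulrBr.
Qed.

Lemma expect_on_cst T c : expect_on T (fun _ _ => c) = mass_on T * c.
Proof.
rewrite -sum_mul_pmf_on big_distrl; apply: eq_bigr => x _.
by rewrite big_distrl.
Qed.

Lemma sum_diff_pmf_on T : \sum_(z <- diff_supp sX sY) diff_pmf_on T z = mass_on T.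
Proof.
have := sum_diff_supp_diff_pmf_on T (fun _ => 1); rewrite expect_on_cst mulr1 => <-.
by apply: eq_bigr => z _; rewrite mulr1.
Qed.

Lemma expect_on_l T f :
  expect_on T (fun x _ => f x) = \sum_(x <- sX | T x) pX x * f x.
Proof.
apply: eq_bigr => x _; under eq_bigr do rewrite mulrAC.
by rewrite -big_distrr /= sum_pY mulr1.
Qed.

Lemma expect_on_r T g :
  expect_on T (fun _ y => g y) = mass_on T * \sum_(y <- sY) pY y * g y.
Proof.
rewrite big_distrl; apply: eq_bigr => x _; rewrite big_distrr.
by apply: eq_bigr => y _; rewrite /= mulrA.
Qed.

Lemma expect_on_split T F :
  expect_on xpredT F = expect_on T F + expect_on (predC T) F.
Proof. exact: bigID. Qed.

Lemma expect_on_ln_le_gibbs T (b : G -> G -> R) :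
  (forall x y, 0 <= b x y) ->
  (forall x y, T x -> 0 < pX x * pY y -> 0 < b x y) ->
  \sum_(x <- sX | T x) \sum_(y <- sY) b x y <= mass_on T ->
  expect_on T (fun x y => ln (b x y)) <= expect_on T (fun x y => ln (pX x * pY y)).
Proof.
move=> b_ge0 b_gt0 b_sum; rewrite -subr_ge0 -expect_onB.
apply: le_trans (_ : 0 <= mass_on T - \sum_(x <- sX | T x) \sum_(y <- sY) b x y) _.
  by rewrite subr_ge0.
rewrite -sum_mul_pmf_on -sumrB; apply: ler_sum => x Tx.
by rewrite -sumrB; apply: ler_sum => y _; apply: subr_le_mul_lnB => //; apply: b_gt0.
Qed.

Lemma diff_pmf_on_gt0 T x y : T x -> 0 < pX x * pY y -> 0 < diff_pmf_on T (x - y).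
Proof.
move=> Tx w_gt0; have [_ _ xs ys] := supp_of_mul_pmf_gt0 w_gt0.
exact: lt_le_trans w_gt0 (mul_pmf_le_diff_pmf_on Tx xs ys).
Qed.

Lemma expect_on_lnM T (f g : G -> G -> R) :
  (forall x y, T x -> 0 < pX x * pY y -> 0 < f x y /\ 0 < g x y) ->
  expect_on T (fun x y => ln (f x y * g x y)) =
  expect_on T (fun x y => ln (f x y)) + expect_on T (fun x y => ln (g x y)).
Proof.
move=> fg_gt0; rewrite -expect_onD; apply: eq_expect_on => x y Tx w_gt0.
by have [f_gt0 g_gt0] := fg_gt0 x y Tx w_gt0; rewrite lnM ?posrE.
Qed.

Lemma expect_on_ln_mul_pmf T :
  expect_on T (fun x y => ln (pX x * pY y)) =
  expect_on T (fun x _ => ln (pX x)) + expect_on T (fun _ y => ln (pY y)).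
Proof. by apply: expect_on_lnM => x y _ /supp_of_mul_pmf_gt0 []. Qed.

Lemma entropy_diff_pmf_expect :
  entropy (diff_pmf pX sX pY sY) (diff_supp sX sY) =
  - expect_on xpredT (fun x y => ln (diff_pmf pX sX pY sY (x - y))).
Proof.
rewrite -(sum_diff_supp_diff_pmf_on xpredT (fun z => ln (diff_pmf pX sX pY sY z))).
by rewrite -sumrN; apply: eq_bigr => z _; rewrite mul_lnV // (diff_pmf_on_ge0 xpredT).
Qed.

Lemma entropy_expect_l : entropy pX sX = - expect_on xpredT (fun x _ => ln (pX x)).
Proof. by rewrite expect_on_l -sumrN; apply: eq_bigr => x _; rewrite mul_lnV. Qed.

Lemma expect_on_ln_pY T :
  expect_on T (fun _ y => ln (pY y)) = - (mass_on T * entropy pY sY).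
Proof.
rewrite expect_on_r /entropy -mulrN -sumrN; congr (_ * _).
by apply: eq_bigr => y _; rewrite mul_lnV ?opprK.
Qed.

Lemma expect_on_ln_diff_pmf_on_le T :
  expect_on T (fun x y => ln (diff_pmf_on T (x - y))) <=
  expect_on T (fun x _ => ln (pX x)).
Proof.
pose b x y := diff_pmf_on T (x - y) * pY y.
have b_pos x y : T x -> 0 < pX x * pY y -> 0 < diff_pmf_on T (x - y) /\ 0 < pY y.
  by move=> Tx w_gt0; have [_ ? _ _] := supp_of_mul_pmf_gt0 w_gt0; split;
    rewrite ?diff_pmf_on_gt0.
have b_sum : \sum_(x <- sX | T x) \sum_(y <- sY) b x y <= mass_on T.
  rewrite exchange_big /= -[leRHS]mulr1 -sum_pY big_distrr /=.
  apply: ler_sum => y _; rewrite -big_distrl /=.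
  by apply: ler_wpM2r => //; apply: sum_diff_pmf_on_subr.
have b_ge0 x y : 0 <= b x y by apply: mulr_ge0 => //; apply: diff_pmf_on_ge0.
have b_gt0 x y : T x -> 0 < pX x * pY y -> 0 < b x y.
  by move=> Tx /(b_pos _ _ Tx) [? ?]; apply: mulr_gt0.
have := expect_on_ln_le_gibbs b_ge0 b_gt0 b_sum.
by rewrite /b (expect_on_lnM b_pos) expect_on_ln_mul_pmf lerD2r.
Qed.

Lemma entropy_le_entropy_diff_r :
  entropy pY sY <= entropy (diff_pmf pX sX pY sY) (diff_supp sX sY).
Proof.
pose Z := diff_pmf pX sX pY sY; pose b x y := pX x * Z (x - y).
have b_pos x y : xpredT x -> 0 < pX x * pY y -> 0 < pX x /\ 0 < Z (x - y).
  by move=> _ w_gt0; have [? _ _ _] := supp_of_mul_pmf_gt0 w_gt0; split;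
    rewrite ?(diff_pmf_on_gt0 (T := xpredT)).
have b_ge0 x y : 0 <= b x y by apply: mulr_ge0 => //; apply: diff_pmf_on_ge0.
have b_gt0 x y : xpredT x -> 0 < pX x * pY y -> 0 < b x y.
  by move=> Tx /(b_pos _ _ Tx) [? ?]; apply: mulr_gt0.
have b_sum : \sum_(x <- sX | xpredT x) \sum_(y <- sY) b x y <= mass_on xpredT.
  rewrite [leRHS]mass_onT -sum_pX; apply: ler_sum => x _.
  rewrite -big_distrr -[leRHS]mulr1 /=; apply: ler_wpM2l => //.
  by rewrite -[leRHS]mass_onT; apply: (sum_diff_pmf_on_subl xpredT).
have := expect_on_ln_le_gibbs b_ge0 b_gt0 b_sum.
rewrite /b (expect_on_lnM b_pos) expect_on_ln_mul_pmf lerD2l expect_on_ln_pY.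
rewrite mass_onT mul1r entropy_diff_pmf_expect lerNr; exact.
Qed.

Lemma entropy_le_entropy_diff_l :
  entropy pX sX <= entropy (diff_pmf pX sX pY sY) (diff_supp sX sY).
Proof.
rewrite entropy_diff_pmf_expect entropy_expect_l lerN2.
exact: (expect_on_ln_diff_pmf_on_le xpredT).
Qed.

Lemma ruzsa_dist_ge0 : 0 <= ruzsa_dist pX sX pY sY.
Proof.
have := entropy_le_entropy_diff_l; have := entropy_le_entropy_diff_r.
rewrite /ruzsa_dist; lra.
Qed.

(* Summed over [T] and [predC T], this is H(X - Y) >= H(X - Y | [X \in T]). *)
Lemma expect_on_ln_diff_pmf_le T :
  mass_on T * ln (mass_on T) +
    expect_on T (fun x y => ln (diff_pmf pX sX pY sY (x - y))) <=
  expect_on T (fun x y => ln (diff_pmf_on T (x - y))).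
Proof.
pose Z := diff_pmf pX sX pY sY; pose ZT := diff_pmf_on T.
have ZT_ge0 z : 0 <= ZT z by apply: diff_pmf_on_ge0.
have mZ_ge0 z : 0 <= mass_on T * Z z.
  by apply: mulr_ge0; [apply: mass_on_ge0 | apply: (diff_pmf_on_ge0 xpredT)].
have ZT_pos z : 0 < ZT z -> 0 < mass_on T /\ 0 < Z z.
  by move=> ZT_gt0; split; apply: lt_le_trans ZT_gt0 _;
    [apply: diff_pmf_on_le_mass_on | apply: diff_pmf_on_le_diff_pmf].
have mZ_gt0 z : 0 < ZT z -> 0 < mass_on T * Z z.
  by move=> /ZT_pos [? ?]; apply: mulr_gt0.
have := gibbs_ineq (diff_supp sX sY) ZT_ge0 mZ_ge0 mZ_gt0.
rewrite sum_diff_pmf_on -big_distrr /= (sum_diff_pmf_on xpredT) mass_onT mulr1 subrr.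
rewrite (eq_bigr (fun z => ZT z * (ln (ZT z) - ln (mass_on T) - ln (Z z)))).
  rewrite sum_diff_supp_diff_pmf_on !expect_onB expect_on_cst; lra.
move=> z _; have [->|ZT_neq0] := eqVneq (ZT z) 0; first by rewrite !mul0r.
have [m_gt0 Z_gt0] : 0 < mass_on T /\ 0 < Z z.
  by apply: ZT_pos; rewrite lt0r ZT_neq0 ZT_ge0.
by rewrite lnM ?posrE // opprD addrA.
Qed.

Lemma expect_on_ln_diff_pmf_on_le_count T (n : nat) :
  (count T sX <= n)%N -> 0 < mass_on T ->
  expect_on T (fun x y => ln (diff_pmf_on T (x - y))) <=
  expect_on T (fun x _ => ln (pX x)) + mass_on T * (ln n%:R - entropy pY sY).
Proof.
move=> count_le m_gt0.
have n_gt0 : (0 : R) < n%:R.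
  rewrite ltr0n (leq_trans _ count_le) // -has_count.
  by apply: contraTT m_gt0 => no_hit; rewrite /mass_on big_hasC ?ltxx.
pose b x y := diff_pmf_on T (x - y) * n%:R^-1.
have b_pos x y :
    T x -> 0 < pX x * pY y -> 0 < diff_pmf_on T (x - y) /\ 0 < (n%:R : R)^-1.
  move=> Tx w_gt0; split; first exact: diff_pmf_on_gt0 Tx w_gt0.
  by rewrite invr_gt0.
have b_ge0 x y : 0 <= b x y.
  by apply: mulr_ge0; [apply: diff_pmf_on_ge0 | rewrite invr_ge0 ltW].
have b_gt0 x y : T x -> 0 < pX x * pY y -> 0 < b x y.
  by move=> Tx /(b_pos _ _ Tx) [? ?]; apply: mulr_gt0.
have b_sum : \sum_(x <- sX | T x) \sum_(y <- sY) b x y <= mass_on T.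
  apply: (@le_trans _ _ (\sum_(x <- sX | T x) mass_on T * n%:R^-1)).
    apply: ler_sum => x _; rewrite -big_distrl /=.
    by apply: ler_wpM2r; [rewrite invr_ge0 ltW | apply: sum_diff_pmf_on_subl].
  rewrite big_const_seq iter_addr_0 -[leLHS]mulr_natr -mulrA ler_piMr ?mass_on_ge0 //.
  by rewrite mulrC ler_pdivrMr // mul1r ler_nat.
have := expect_on_ln_le_gibbs b_ge0 b_gt0 b_sum.
rewrite /b (expect_on_lnM b_pos) expect_on_ln_mul_pmf expect_on_cst.
by rewrite lnV ?posrE // expect_on_ln_pY; lra.
Qed.

Lemma entropy_diff_ge_concentrated (S : seq G) :
  uniq S -> 0 < prob_in pX sX S ->
  entropy pX sX + prob_in pX sX S * (entropy pY sY - ln (size S)%:R) - ln 2 <=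
  entropy (diff_pmf pX sX pY sY) (diff_supp sX sY).
Proof.
move=> S_uniq p_gt0; pose T x := x \in S.
have -> : prob_in pX sX S = mass_on T by [].
have count_le : (count T sX <= size S)%N.
  rewrite -size_filter uniq_leq_size ?filter_uniq // => x.
  by rewrite mem_filter => /andP [].
have on_S := expect_on_ln_diff_pmf_le T.
have on_notS := expect_on_ln_diff_pmf_le (predC T).
have size_bound := expect_on_ln_diff_pmf_on_le_count count_le p_gt0.
have notS_bound := expect_on_ln_diff_pmf_on_le (predC T).
have bin :=
  binary_entropy_le_ln2 (mass_on_ge0 T) (mass_on_ge0 (predC T)) (mass_on_split T).
rewrite entropy_diff_pmf_expect entropy_expect_l !(expect_on_split T).
lra.
Qed.

Lemma ruzsa_dist_ge_concentrated (S : seq G) :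
  uniq S -> 0 < prob_in pX sX S ->
  prob_in pX sX S * (entropy pY sY - ln (size S)%:R) - ln 2 <=
  2 * ruzsa_dist pX sX pY sY.
Proof.
move=> S_uniq p_gt0; have := entropy_diff_ge_concentrated S_uniq p_gt0.
have := entropy_le_entropy_diff_r; rewrite /ruzsa_dist; lra.
Qed.

End DifferenceLaw.

Theorem propositionA8 (R : realType) (G : zmodType)
  (pX : G -> R) (sX : seq G) (pY : G -> R) (sY : seq G) (S : seq G) :
  fsdist pX sX -> fsdist pY sY -> uniq S ->
  1 / 2 <= prob_in pX sX S ->
  entropy pY sY - 4 * ruzsa_dist pX sX pY sY - 2 * ln 2 <= ln (size S)%:R.
Proof.
move=> hX hY S_uniq p_half.
have p_gt0 : 0 < prob_in pX sX S by apply: lt_le_trans p_half; rewrite divr_gt0.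
have d_ge0 := ruzsa_dist_ge0 hX hY.
have key := ruzsa_dist_ge_concentrated hX hY S_uniq p_gt0.
have ln2_ge0 : 0 <= ln (2 : R) by rewrite ln_ge0 // ler1n.
have [HY_le|HY_gt] := lerP (entropy pY sY) (ln (size S)%:R); first by lra.
have : (entropy pY sY - ln (size S)%:R) / 2 <=
       prob_in pX sX S * (entropy pY sY - ln (size S)%:R) by nra.
lra.
Qed.
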